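(* Let $G=(V,E)$ be a graph and let $B_1,\dots,B_m$ be bicliques whose edge sets partition $E$, with fixed orientations $B_i=L_i\times R_i$ ($L_i,R_i\subseteq V$ disjoint, the edges of $B_i$ being all $\{u,v\}$ with $u\in L_i$, $v\in R_i$). For $i\in[m]$ define $h_i:V\to\{0,1,\star\}$ by $h_i(v)=0$ if $v\in L_i$, $h_i(v)=1$ if $v\in R_i$, and $h_i(v)=\star$ otherwise, and let $\mathbb{G}=\{h_1,\dots,h_m\}\subseteq\{0,1,\star\}^V$. Then $\mathrm{LD}(\mathbb{G})\le 2$.
   Context: Littlestone dimension of a partial class $\mathbb{H}\subseteq\{0,1,\star\}^{\mathcal{X}}$: the largest $d$ such that there is a full binary tree of height $d$ with internal nodes $v\in\bigcup_{k<d}\{0,1\}^k$ labelled by points $x_v\in\mathcal{X}$, such that for every $y\in\{0,1\}^d$ some $h\in\mathbb{H}$ satisfies $h(x_{y_1\cdots y_{i-1}})=y_i$ for all $i\in[d]$. *)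

From mathcomp Require Import all_boot.
Set Implicit Arguments. Unset Strict Implicit. Unset Printing Implicit Defensive.

(* Partial concepts: {0,1,*} is rendered as [option bool]:
   Some false = 0, Some true = 1, None = star. *)
Definition partial_concept (X : Type) := X -> option bool.

(* A tree of height d with internal nodes v in {0,1}^k (k<d) labelled by
   points x v; nodes are bit sequences (only those of size < d matter). *)
Definition shattered_tree (X : Type) (H : partial_concept X -> Prop) (d : nat)
    (x : seq bool -> X) : Prop :=
  forall y : seq bool, size y = d ->
    exists h, H h /\ forall i, i < d -> h (x (take i y)) = Some (nth false y i).

Definition LD_le (X : Type) (H : partial_concept X -> Prop) (n : nat) : Prop :=
  forall d (x : seq bool -> X), shattered_tree H d x -> d <= n.

Definition biclique_concept (V : finType) (L R : {set V}) : partial_concept V :=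
  fun v => if v \in L then Some false else if v \in R then Some true else None.

Definition simple_graph (V : finType) (E : rel V) : Prop :=
  (forall u v, E u v = E v u) /\ (forall u, ~~ E u u).

Definition biclique_partition (V : finType) (E : rel V) (m : nat)
    (L R : 'I_m -> {set V}) : Prop :=
  [/\ forall i, [disjoint L i & R i],
      forall i, L i != set0 /\ R i != set0,
      forall i u v, u \in L i -> v \in R i -> E u v
    & forall u v, E u v ->
        exists! i : 'I_m, (u \in L i) && (v \in R i) || (v \in L i) && (u \in R i)].

(* Suppose a tree of height d >= 3 is shattered by the class of
   biclique concepts, with root label a, left child b = x [:: false] and
   c = x [:: false; true].  The two branches 0,1,0 and 0,1,1 are realized by
   concepts h_i and h_j.  Both put a on the left side and b on the right side,
   so {a, b} is an edge lying in the bicliques i and j; since the bicliques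
   partition the edges, i = j.  But then one concept assigns both 0 and 1
   to c, which is absurd. *)

From mathcomp Require Import all_boot.

Set Implicit Arguments.

(* A shattered tree of height d realizes every branch prefix of length <= d:
   extend the prefix arbitrarily to a full branch. *)
Lemma shattered_tree_prefix (X : Type) (H : partial_concept X -> Prop) d
    (x : seq bool -> X) (y : seq bool) :
  shattered_tree H d x -> size y <= d ->
  exists h, H h /\ forall i, i < size y -> h (x (take i y)) = Some (nth false y i).
Proof.
move=> shx le_y_d.
have size_ext : size (y ++ nseq (d - size y) false) = d.
  by rewrite size_cat size_nseq subnKC.
have [h [Hh hy]] := shx _ size_ext.
exists h; split=> // i lt_i_y.
have := hy i (leq_trans lt_i_y le_y_d).
by rewrite takel_cat ?(ltnW lt_i_y) // nth_cat lt_i_y.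
Qed.

Lemma biclique_concept_false (V : finType) (L R : {set V}) v :
  biclique_concept L R v = Some false -> v \in L.
Proof. by rewrite /biclique_concept; case: (v \in L) => //; case: (v \in R). Qed.

Lemma biclique_concept_true (V : finType) (L R : {set V}) v :
  biclique_concept L R v = Some true -> v \in R.
Proof. by rewrite /biclique_concept; case: (v \in L) => //; case: (v \in R). Qed.

Lemma oriented_edge_biclique_unique (V : finType) (E : rel V) m
    (L R : 'I_m -> {set V}) {u v : V} {i j : 'I_m} :
  biclique_partition E L R ->
  u \in L i -> v \in R i -> u \in L j -> v \in R j -> i = j.
Proof.
move=> [_ _ edge_of uniq_of] uLi vRi uLj vRj.
have [k [_ k_uniq]] := uniq_of _ _ (edge_of i u v uLi vRi).
by rewrite -(k_uniq i) ?uLi ?vRi // (k_uniq j) ?uLj ?vRj.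
Qed.

Theorem claim3p1 (V : finType) (E : rel V) (m : nat) (L R : 'I_m -> {set V}) :
  simple_graph E ->
  biclique_partition E L R ->
  LD_le (fun h => exists i : 'I_m, h = biclique_concept (L i) (R i)) 2.
Proof.
move=> _ part d x shx; rewrite leqNgt; apply/negP => d_gt2.
have branch (b : bool) : exists i : 'I_m,
    [/\ x [::] \in L i, x [:: false] \in R i &
        biclique_concept (L i) (R i) (x [:: false; true]) = Some b].
  have [_ [[i ->] hy]] := shattered_tree_prefix [:: false; true; b] shx d_gt2.
  exists i; split.
  - by apply: biclique_concept_false; exact: (hy 0 isT).
  - by apply: biclique_concept_true; exact: (hy 1 isT).
  - exact: (hy 2 isT).
have [i [aLi bRi ci0]] := branch false.
have [j [aLj bRj cj1]] := branch true.
have eq_ij := oriented_edge_biclique_unique part aLi bRi aLj bRj.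
by move: ci0; rewrite eq_ij cj1.
Qed.
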